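(* Let $1\le p<\infty$, let $w$ be a weight, and let $\mathcal B$ be a collection of balls in $\mathbb{R}^n$ whose union is $\mathbb{R}^n$. If the maximal operator $M_{\mathcal B}$ is bounded from $\mathcal M^{p}(\varphi,w)$ to $W\mathcal M^{p}(\varphi,w)$ (in particular, if it is bounded on $\mathcal M^{p}(\varphi,w)$), then $w\in A_{\mathcal B}(\mathcal M^{p}(\varphi))$. Moreover, the operator norm of $M_{\mathcal B}$ from $\mathcal M^{p}(\varphi,w)$ to $W\mathcal M^{p}(\varphi,w)$ is bounded below by $[w]_{A_{\mathcal B}(\mathcal M^{p}(\varphi))}$.
   Context: A weight is a nonnegative locally integrable function on $\mathbb{R}^n$. Let $\varphi$ be a function from the set of Euclidean balls of $\mathbb{R}^n$ to $(0,\infty)$; standing assumptions: $\varphi$ is doubling ($\varphi(2B)\le C\varphi(B)$) and reverse doubling (there are $\delta>0$, $C$ with $\varphi(B_1)/\varphi(B_2)\le C(|B_1|/|B_2|)^\delta$ for balls $B_1\subset B_2$), and characteristic functions of balls belong to $\mathcal M^{p}(\varphi,w)$. $\mathcal M^{p}(\varphi,w)$ is the space of measurable $f$ with $\|f\|_{\mathcal M^{p}(\varphi,w)}:=\sup_B\big(\varphi(B)^{-1}\int_B|f|^pw\big)^{1/p}<\infty$ (supremum over all balls). $W\mathcal M^{p}(\varphi,w)$ is the space of measurable $f$ with $\|f\|_{W\mathcal M^{p}(\varphi,w)}:=\sup_B\sup_{t>0} t\, w(\{x\in B:|f(x)|>t\})^{1/p}\varphi(B)^{-1/p}<\infty$.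 For a Banach lattice $X$, the Köthe dual $X'$ has norm $\|g\|_{X'}:=\sup\{\int|fg|:\|f\|_X\le1\}$. $M_{\mathcal B}f(x):=\sup\{|B|^{-1}\int_B|f|: x\in B\in\mathcal B\}$. $[w]_{A_{\mathcal B}(\mathcal M^{p}(\varphi))}:=\sup_{B\in\mathcal B}\|\chi_B\|_{\mathcal M^{p}(\varphi,w)}\|\chi_B\|_{\mathcal M^{p}(\varphi,w)'}/|B|$, and $A_{\mathcal B}(\mathcal M^{p}(\varphi))$ is the class of weights for which it is finite. *)

(* R^n is modelled as [n.-tuple R] with its
   canonical product (Borel) sigma-algebra; the Lebesgue measure is an
   explicit measure [mu] characterised by its values on boxes (see
   [is_lebesgue_measure]). *)
From HB Require Import structures.
From mathcomp Require Import all_boot all_order all_algebra.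
From mathcomp Require Import all_classical all_reals all_analysis.
Set Implicit Arguments. Unset Strict Implicit. Unset Printing Implicit Defensive.
Import Order.TTheory GRing.Theory Num.Theory.
Import numFieldNormedType.Exports.
Local Open Scope classical_set_scope.
Local Open Scope ring_scope.

Section Defs.
Variable R : realType.
Variable n : nat.
Local Notation T := (n.-tuple R).

Definition eball (c : T) (r : R) : set T :=
  [set x | \sum_(i < n) (tnth x i - tnth c i) ^+ 2 < r ^+ 2].

Definition is_eball (B : set T) : Prop :=
  exists c : T, exists r : R, 0 < r /\ B = eball c r.

Definition box (a b : T) : set T :=
  [set x | forall i : 'I_n, tnth a i <= tnth x i <= tnth b i].

Definition is_lebesgue_measure (mu : {measure set T -> \bar R}) : Prop :=
  forall a b : T, (forall i : 'I_n, tnth a i <= tnth b i) ->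
    mu (box a b) = (\prod_(i < n) (tnth b i - tnth a i))%:E.

Variable mu : {measure set T -> \bar R}.

Definition is_weight (w : T -> R) : Prop :=
  [/\ forall x, 0 <= w x, measurable_fun setT w &
      forall c r, 0 < r -> mu.-integrable (eball c r) (EFin \o w)].

Definition wmeas (w : T -> R) (E : set T) : \bar R :=
  (\int[mu]_(x in E) (w x)%:E)%E.

Definition doubling (phi : set T -> R) : Prop :=
  exists C : R, forall c r, 0 < r -> phi (eball c (2 * r)) <= C * phi (eball c r).

Definition reverse_doubling (phi : set T -> R) : Prop :=
  exists delta : R, exists C : R, 0 < delta /\
    forall B1 B2, is_eball B1 -> is_eball B2 -> B1 `<=` B2 ->
      phi B1 / phi B2 <= C * (fine (mu B1) / fine (mu B2)) `^ delta.

Definition morrey_norm (p : R) (phi : set T -> R) (w : T -> R) (f : T -> R)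
  : \bar R :=
  ((ereal_sup [set ((phi B)^-1)%:E *
                  \int[mu]_(x in B) ((`|f x| `^ p) * w x)%:E
              | B in is_eball]) `^ p^-1)%E.

Definition weak_term (p : R) (phi : set T -> R) (w : T -> R)
  (F : T -> \bar R) (B : set T) (t : R) : \bar R :=
  (t%:E * (wmeas w [set x | B x /\ (t%:E < `|F x|)%E]) `^ p^-1
     * ((phi B) `^ (- p^-1))%:E)%E.

Definition weak_morrey_norm (p : R) (phi : set T -> R) (w : T -> R)
  (F : T -> \bar R) : \bar R :=
  ereal_sup [set weak_term p phi w F Bt.1 Bt.2
            | Bt in [set Bt : set T * R | is_eball Bt.1 /\ 0 < Bt.2]].

Definition kothe_norm (N : (T -> R) -> \bar R) (g : T -> R) : \bar R :=
  ereal_sup [set (\int[mu]_x (`|f x * g x|)%:E)%E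
            | f in [set f : T -> R | measurable_fun setT f /\ (N f <= 1)%E]].

Definition maximal_op (Bs : set (set T)) (f : T -> R) (x : T) : \bar R :=
  ereal_sup [set (((fine (mu B))^-1)%:E * \int[mu]_(y in B) (`|f y|)%:E)%E
            | B in [set B | Bs B /\ B x]].

Definition chiB (B : set T) : T -> R := fun x => \1_B x.

Definition ABconst (Bs : set (set T)) (p : R) (phi : set T -> R) (w : T -> R)
  : \bar R :=
  ereal_sup [set (morrey_norm p phi w (chiB B)
                  * kothe_norm (morrey_norm p phi w) (chiB B)
                  * ((fine (mu B))^-1)%:E)%E
            | B in Bs].

(* operator norm of M_Bs : M^p(phi,w) -> WM^p(phi,w) (inf of admissible
   constants; +oo if there is none) *)
Definition maximal_opnorm (Bs : set (set T)) (p : R) (phi : set T -> R)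
  (w : T -> R) : \bar R :=
  ereal_inf [set C%:E | C in [set C : R | 0 <= C /\
      forall f : T -> R, measurable_fun setT f ->
        (morrey_norm p phi w f < +oo)%E ->
        (weak_morrey_norm p phi w (maximal_op Bs f)
           <= C%:E * morrey_norm p phi w f)%E]].

End Defs.

From HB Require Import structures.
From mathcomp Require Import all_boot all_order all_algebra.
From mathcomp Require Import all_classical all_reals all_analysis.
From mathcomp Require Import lra.
Set Implicit Arguments.
Unset Strict Implicit.
Unset Printing Implicit Defensive.
Import Order.TTheory GRing.Theory Num.Theory.
Local Open Scope classical_set_scope.
Local Open Scope ring_scope.

(* Let C be an admissible constant for M_Bs : M^p -> WM^p, B in Bs and
   ||f||_{M^p} <= 1.  Every point of B sees M f >= <|f|>_B, so B lies in the
   level set {M f > s} for every s < <|f|>_B, and the weak Morrey bound on that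
   level set controls the Morrey norm of chi_B:
     s ||chi_B||_{M^p} <= ||M f||_{WM^p} <= C.
   Hence (int |f chi_B|) ||chi_B||_{M^p} <= C |B|, and the supremum over f gives
   ||chi_B||_{M^p} ||chi_B||_{M^p}' / |B| <= C. *)

Lemma lee_EFin_of_forall_lt (R : realType) (x : \bar R) (c : R) : 0 <= c ->
  (forall t : R, 0 < t -> (t%:E < x)%E -> t <= c) -> (x <= c%:E)%E.
Proof.
move=> c0 xc; rewrite leNgt; apply/negP => cx.
case: x cx xc => [r| |] // cr xc.
- have := xc ((c + r) / 2); rewrite lte_fin in cr.
  have mid_gt0 : 0 < (c + r) / 2 by apply: divr_gt0 => //; lra.
  by move=> /(_ mid_gt0); rewrite lte_fin => /(_ ltac:(lra)); lra.
- have := xc (c + 1); rewrite ltry => /(_ ltac:(lra) isT); lra.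
Qed.

(* Unlike [ge0_le_integral], no measurability is required: both sides are
   suprema of integrals of simple functions below the integrands. *)
Lemma ge0_le_integral_patch (R : realType) d (T : measurableType d)
    (mu : {measure set T -> \bar R}) (D E : set T) (f g : T -> \bar R) :
  (forall x, D x -> 0 <= f x)%E -> (forall x, E x -> 0 <= g x)%E ->
  (forall x, (f \_ D) x <= (g \_ E) x)%E ->
  (\int[mu]_(x in D) f x <= \int[mu]_(x in E) g x)%E.
Proof.
move=> f0 g0 fg; rewrite (ge0_integralE mu f0) (ge0_integralE mu g0).
apply: ge_ereal_sup => _ [h hf <-]; apply: ereal_sup_ubound; exists h => //.
by move=> x; apply: le_trans (hf x) (fg x).
Qed.

Definition maximal_weak_bound (R : realType) (n : nat)
    (mu : {measure set (n.-tuple R) -> \bar R}) (Bs : set (set (n.-tuple R)))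
    (p : R) (phi : set (n.-tuple R) -> R) (w : n.-tuple R -> R) (C : R) : Prop :=
  0 <= C /\ forall f : n.-tuple R -> R, measurable_fun setT f ->
    (morrey_norm mu p phi w f < +oo)%E ->
    (weak_morrey_norm mu p phi w (maximal_op mu Bs f)
       <= C%:E * morrey_norm mu p phi w f)%E.

Section MorreyNorms.
Variables (R : realType) (n : nat) (mu : {measure set (n.-tuple R) -> \bar R}).
Variables (phi : set (n.-tuple R) -> R) (p : R) (w : n.-tuple R -> R).
Hypothesis phi_gt0 : forall B, is_eball B -> 0 < phi B.
Hypothesis p_gt0 : 0 < p.
Hypothesis w_ge0 : forall x, 0 <= w x.
Local Open Scope ereal_scope.

Let p_neq0 : (p != 0)%R. Proof. by rewrite gt_eqF. Qed.

Let invp_ge0 : (0 <= p^-1)%R. Proof. by rewrite invr_ge0 ltW. Qed.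

Let inv_phi_ge0 B : is_eball B -> 0 <= ((phi B)^-1)%:E.
Proof. by move=> Bb; rewrite lee_fin invr_ge0 ltW ?phi_gt0. Qed.

Lemma morrey_norm_le (f : n.-tuple R -> R) (K : R) : (0 <= K)%R ->
  (forall B, is_eball B ->
    (((phi B)^-1)%:E * \int[mu]_(x in B) ((`|f x| `^ p) * w x)%:E) `^ p^-1
      <= K%:E) ->
  morrey_norm mu p phi w f <= K%:E.
Proof.
move=> K0 fK; rewrite /morrey_norm; set S := ereal_sup _.
have term_ge0 B : is_eball B ->
    0 <= ((phi B)^-1)%:E * \int[mu]_(x in B) ((`|f x| `^ p) * w x)%:E.
  move=> Bb; apply: mule_ge0; first exact: inv_phi_ge0.
  by apply: integral_ge0 => x _; rewrite lee_fin mulr_ge0 ?powR_ge0.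
pose B1 := eball [tuple (0%R : R) | _ < n] 1%R.
have B1b : is_eball B1 by exists [tuple 0%R | _ < n], 1%R.
have S_ge0 : 0 <= S.
  by apply: le_trans (term_ge0 _ B1b) _; apply: ereal_sup_ubound; exists B1.
have S_le : S <= (K `^ p)%:E.
  apply: ge_ereal_sup => _ [B Bb <-].
  rewrite -(poweRe1 (term_ge0 B Bb)) -(mulVf p_neq0) poweRrM -poweR_EFin.
  apply: (gt0_ler_poweR (ltW p_gt0)); last exact: fK.
    by rewrite in_itv /= leey andbT poweR_ge0.
  by rewrite in_itv /= leey andbT lee_fin.
have -> : K%:E = (K `^ p)%:E `^ p^-1 by rewrite poweR_EFin -powRrM mulfV // powRr1.
apply: (gt0_ler_poweR invp_ge0) S_le; first by rewrite in_itv /= leey andbT.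
by rewrite in_itv /= leey andbT lee_fin powR_ge0.
Qed.

Lemma weak_level_set_le (F : n.-tuple R -> \bar R) (B : set (n.-tuple R))
    (t C : R) :
  is_eball B -> (0 < t)%R -> weak_morrey_norm mu p phi w F <= C%:E ->
  (((phi B)^-1)%:E * wmeas mu w [set x | B x /\ t%:E < `|F x|]) `^ p^-1
    <= (C / t)%:E.
Proof.
move=> Bb t_gt0 FC; set W := wmeas _ _ _.
have phiB_ge0 := ltW (phi_gt0 Bb).
have W_ge0 : 0 <= W by apply: integral_ge0 => x _; rewrite lee_fin.
have term_le : weak_term mu p phi w F B t <= C%:E.
  by apply: le_trans FC; apply: ereal_sup_ubound; exists (B, t).
rewrite poweRM ?inv_phi_ge0 // poweR_EFin -powR_inv1 // -powRrM mulN1r.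
rewrite EFinM lee_pdivlMr // (muleC _%:E (W `^ _)) muleC muleA.
exact: term_le.
Qed.

Lemma morrey_norm_chiB_le (F : n.-tuple R -> \bar R) (B : set (n.-tuple R))
    (s C : R) :
  (0 <= C)%R -> (0 < s)%R -> (forall x, B x -> s%:E < `|F x|) ->
  weak_morrey_norm mu p phi w F <= C%:E ->
  morrey_norm mu p phi w (chiB B) <= (C / s)%:E.
Proof.
move=> C_ge0 s_gt0 BF FC.
apply: morrey_norm_le => [|B' B'b]; first by rewrite divr_ge0 // ltW.
apply: le_trans _ (weak_level_set_le B'b s_gt0 FC).
set S := [set x | B' x /\ s%:E < `|F x|].
have chi_le : \int[mu]_(x in B') ((`|chiB B x| `^ p) * w x)%:E <= wmeas mu w S.
  apply: ge0_le_integral_patch => [x _|x _|x]; rewrite ?lee_fin ?mulr_ge0 ?powR_ge0 //.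
  rewrite /patch /chiB indicE; case: ifPn => xB'; case: ifPn => xS; rewrite ?lee_fin //.
    by case: (x \in B); rewrite ?normr1 ?normr0 ?powR1 ?powR0 // ?mul1r ?mul0r.
  have /negbTE-> : x \notin B.
    apply: contra xS; rewrite !in_setE => Bx; split; [exact/set_mem | exact: BF].
  by rewrite normr0 powR0 // mul0r.
have J_ge0 : 0 <= \int[mu]_(x in B') ((`|chiB B x| `^ p) * w x)%:E.
  by apply: integral_ge0 => x _; rewrite lee_fin mulr_ge0 ?powR_ge0.
apply: (gt0_ler_poweR invp_ge0); last exact: lee_wpmul2l (inv_phi_ge0 B'b) _ _ chi_le.
- by rewrite in_itv /= leey andbT mule_ge0 ?inv_phi_ge0.
- by rewrite in_itv /= leey andbT mule_ge0 ?inv_phi_ge0 ?(le_trans J_ge0 chi_le).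
Qed.

Lemma maximal_op_ge_average (Bs : set (set (n.-tuple R))) (f : n.-tuple R -> R)
    (B : set (n.-tuple R)) (x : n.-tuple R) :
  Bs B -> B x ->
  ((fine (mu B))^-1)%:E * \int[mu]_(y in B) (`|f y|)%:E <= maximal_op mu Bs f x.
Proof. by move=> BsB Bx; apply: ereal_sup_ubound; exists B. Qed.

Lemma integral_abs_mul_chiB (f : n.-tuple R -> R) (B : set (n.-tuple R)) :
  \int[mu]_x (`|f x * chiB B x|)%:E = \int[mu]_(x in B) (`|f x|)%:E.
Proof.
rewrite [RHS]integral_mkcond; apply: eq_integral => x _.
by rewrite /patch /chiB indicE; case: ifP; rewrite ?mulr1 ?mulr0 ?normr0.
Qed.

Lemma average_mul_morrey_norm_chiB_le (Bs : set (set (n.-tuple R)))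
    (B : set (n.-tuple R)) (C s : R) (f : n.-tuple R -> R) :
  Bs B -> maximal_weak_bound mu Bs p phi w C -> measurable_fun setT f ->
  morrey_norm mu p phi w f <= 1 -> (0 < s)%R ->
  s%:E < ((fine (mu B))^-1)%:E * \int[mu]_(y in B) (`|f y|)%:E ->
  s%:E * morrey_norm mu p phi w (chiB B) <= C%:E.
Proof.
move=> BsB [C_ge0 MC] mf f_le1 s_gt0 s_lt_avg.
have MfC : weak_morrey_norm mu p phi w (maximal_op mu Bs f) <= C%:E.
  apply: le_trans (MC f mf (le_lt_trans f_le1 (ltry _))) _.
  by rewrite -[leRHS]mule1; apply: lee_wpmul2l; rewrite ?lee_fin.
have s_lt_Mf x : B x -> s%:E < `|maximal_op mu Bs f x|.
  move=> Bx; apply: lt_le_trans (lee_abs _).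
  exact: lt_le_trans s_lt_avg (maximal_op_ge_average _ BsB Bx).
rewrite -lee_pdivlMl // -EFinM mulrC.
exact: morrey_norm_chiB_le C_ge0 s_gt0 s_lt_Mf MfC.
Qed.

Lemma ABconst_term_le (Bs : set (set (n.-tuple R))) (B : set (n.-tuple R)) (C : R) :
  Bs B -> morrey_norm mu p phi w (chiB B) < +oo ->
  maximal_weak_bound mu Bs p phi w C ->
  morrey_norm mu p phi w (chiB B) * kothe_norm mu (morrey_norm mu p phi w) (chiB B)
    * ((fine (mu B))^-1)%:E <= C%:E.
Proof.
move=> BsB chi_fin MC; have C_ge0 := MC.1.
set m := fine (mu B); have m_ge0 : (0 <= m)%R by apply/fine_ge0/measure_ge0.
have [->|m_neq0] := eqVneq m 0%R; first by rewrite invr0 mule0 lee_fin.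
have m_gt0 : (0 < m)%R by rewrite lt_def m_neq0 m_ge0.
have chi_ge0 : 0 <= morrey_norm mu p phi w (chiB B) by apply: poweR_ge0.
have chi_fin_num : morrey_norm mu p phi w (chiB B) \is a fin_num.
  by rewrite ge0_fin_numE.
rewrite -(fineK chi_fin_num); set a := fine _.
have a_ge0 : (0 <= a)%R by apply: fine_ge0.
have [->|a_neq0] := eqVneq a 0%R; first by rewrite !mul0e lee_fin.
have a_gt0 : (0 < a)%R by rewrite lt_def a_neq0 a_ge0.
rewrite (muleC a%:E) -muleA -EFinM -lee_pdivlMr ?divr_gt0 // -EFinM.
apply: ge_ereal_sup => _ [f [mf f_le1] <-].
apply: lee_EFin_of_forall_lt; first by rewrite mulr_ge0 // invr_ge0 ltW ?divr_gt0.
move=> t t_gt0 t_lt_int; set s := (t / m)%R.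
have s_gt0 : (0 < s)%R by rewrite divr_gt0.
have sa_le : (s * a <= C)%R.
  rewrite -lee_fin EFinM /a fineK //.
  apply: average_mul_morrey_norm_chiB_le BsB MC mf f_le1 s_gt0 _.
  by rewrite -integral_abs_mul_chiB muleC /s EFinM lte_pmul2r // lte_fin invr_gt0.
by rewrite ler_pdivlMr ?divr_gt0 // mulrA mulrAC; exact: sa_le.
Qed.

End MorreyNorms.

Theorem theorem3p1 (R : realType) (n : nat) (hn : (0 < n)%N)
  (mu : {measure set (n.-tuple R) -> \bar R})
  (hmu : is_lebesgue_measure mu)
  (phi : set (n.-tuple R) -> R)
  (hphi_pos : forall B : set (n.-tuple R), is_eball B -> 0 < phi B)
  (hphi_doubling : doubling phi)
  (hphi_rev : reverse_doubling mu phi)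
  (p : R) (hp : 1 <= p)
  (w : n.-tuple R -> R) (hw : is_weight mu w)
  (hchi : forall B : set (n.-tuple R), is_eball B -> (morrey_norm mu p phi w (chiB B) < +oo)%E)
  (Bs : set (set (n.-tuple R)))
  (hBs : forall B : set (n.-tuple R), Bs B -> is_eball B)
  (hcover : \bigcup_(B in Bs) B = setT)
  (hbounded : (maximal_opnorm mu Bs p phi w < +oo)%E) :
  (ABconst mu Bs p phi w < +oo)%E /\
  (ABconst mu Bs p phi w <= maximal_opnorm mu Bs p phi w)%E.
Proof.
have [w_ge0 _ _] := hw.
have p_gt0 : 0 < p by lra.
have AB_le : (ABconst mu Bs p phi w <= maximal_opnorm mu Bs p phi w)%E.
  apply: ge_ereal_sup => _ [B BsB <-].
  apply: le_ereal_inf_tmp => _ [C MC <-].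
  by apply: (ABconst_term_le hphi_pos p_gt0 w_ge0 BsB (hchi B (hBs B BsB))).
by split => //; apply: le_lt_trans AB_le hbounded.
Qed.
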